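(* Let $G$ and $H$ be rooted graphs. Then for any integers $g,j\ge 0$ and $h\ge 1$, \begin{align*} X_{S_j^{gh}(G,H)}&=\sum_{i=0}^{j}X_{P_i}\,X_{P^{g+h+j-i}(G,H)}-\sum_{i=1}^{j}X_{G^{g+i-1}}\,X_{H^{h+j-i}},\quad\text{and}\\ X_{S_{hj}^{g}(G)}&=\sum_{i=0}^{j}X_{P_i}\,X_{G^{g+j-i+h}}-\sum_{i=1}^{j}X_{P_{i+h}}\,X_{G^{g+j-i}}. \end{align*}
   Context: All graphs are finite simple graphs. The chromatic symmetric function of a graph $G$ is $X_G=\sum_{\kappa}\prod_{v\in V(G)}x_{\kappa(v)}$, where $\kappa$ ranges over proper colorings $\kappa:V(G)\to\{1,2,\dots\}$; the empty graph has $X=1$. $P_i$ is the path on $i$ vertices ($P_0$ empty). For nonnegative integers $\tau_1,\tau_2,\tau_3$ and rooted graphs $(G_i,u_i)$, $S^{\tau_1\tau_2\tau_3}(G_1,G_2,G_3)$ is obtained by taking a center vertex $c$ and three paths from $c$, disjoint except at $c$, of lengths $\tau_1,\tau_2,\tau_3$, and identifying $u_i$ with the far end of the $i$-th path (with $c$ if $\tau_i=0$), the $G_i$ being disjoint. Notation: $S_j^{gh}(G,H)=S^{ghj}(G,H,K_1)$ and $S_{hj}^g(G)=S^{ghj}(G,K_1,K_1)$ (legs ending in a single vertex are plain paths). For rooted graphs $(G,u)$, $(H,v)$ and $k\ge0$, $P^k(G,H)$ is obtained from the disjoint union of $G$ and $H$ by adding a path of length $k$ joining $u$ and $v$ (for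 $k=0$ identifying them), and $G^k=P^k(G,K_1)$ is $G$ with a pendant path of length $k$ at its root. *)

From HB Require Import structures.
From mathcomp Require Import all_boot all_algebra.
From mathcomp Require Import mpoly.

Set Implicit Arguments.
Unset Strict Implicit.
Unset Printing Implicit Defensive.

Import GRing.Theory.
Local Open Scope ring_scope.

(* A (finite) graph: a finite vertex type with an adjacency relation.
   Simplicity (symmetric, irreflexive) is imposed as hypotheses where needed. *)
Record graph := Graph { vert : finType; adj : rel vert }.

Record rooted_graph := RGraph { rg :> graph; root : vert rg }.

Definition proper (G : graph) (N : nat) (k : {ffun vert G -> 'I_N}) : bool :=
  [forall u, forall v, adj u v ==> (k u != k v)].

(* Chromatic symmetric function X_G, specialised to the N variables x_1..x_N
   (x_i written 'X_i, i : 'I_N).  X_G is determined by these specialisations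
   for all N. *)
Definition X (N : nat) (G : graph) : {mpoly int[N]} :=
  \sum_(k : {ffun vert G -> 'I_N} | proper k) \prod_(v : vert G) 'X_(k v).

Definition K1 : rooted_graph := @RGraph (@Graph unit (fun _ _ => false)) tt.

Definition P (n : nat) : graph :=
  @Graph ('I_n : finType) (fun i j => (i.+1 == j)%N || (j.+1 == i)%N).

(* Path P_{k+1} (length k) rooted at its end 0. *)
Definition Pr (k : nat) : rooted_graph := @RGraph (P k.+1) ord0.

(* Gluing: disjoint union of A and B with root B identified with root A. *)
Section Glue.
Variables A B : rooted_graph.

Definition glue_vert : finType :=
  (vert A + {x : vert B | x != root B})%type.

Definition inA (x : vert A) : glue_vert := inl x.

Definition inB (x : vert B) : glue_vert :=
  match @insub _ (fun y : vert B => y != root B) _ x with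
  | Some y => inr y
  | None => inl (root A)
  end.

Definition glue_adj : rel glue_vert := fun u v =>
  [exists x, exists y, [&& inA x == u, inA y == v & adj x y]] ||
  [exists x, exists y, [&& inB x == u, inB y == v & adj x y]].

Definition glue_graph : graph := @Graph glue_vert glue_adj.

Definition glue : rooted_graph := @RGraph glue_graph (inA (root A)).
End Glue.

(* G with a pendant path of length k at its root, rooted at the far end
   of the path (the root of G if k = 0).  As an unrooted graph this is G^k. *)
Definition pendant (G : rooted_graph) (k : nat) : rooted_graph :=
  @RGraph (glue_graph G (Pr k)) (@inB G (Pr k) ord_max).

(* G^k = P^k(G, K_1). *)
Definition Gpow (G : rooted_graph) (k : nat) : graph := pendant G k.

(* P^k(G,H): a path of length k joining root G and root H. *)
Definition Pk (k : nat) (G H : rooted_graph) : graph := glue_graph (pendant G k) H.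

(* Spider S^{t1 t2 t3}(G1,G2,G3): centre c, three legs of lengths t1,t2,t3
   ending at (identified with) the roots of G1,G2,G3. *)
Definition spider (t1 t2 t3 : nat) (G1 G2 G3 : rooted_graph) : graph :=
  glue_graph (glue (pendant G1 t1) (pendant G2 t2)) (pendant G3 t3).

(* S_j^{gh}(G,H) = S^{ghj}(G,H,K_1) and S_{hj}^g(G) = S^{ghj}(G,K_1,K_1). *)
Definition S2 (g h j : nat) (G H : rooted_graph) : graph := spider g h j G H K1.
Definition S1 (g h j : nat) (G : rooted_graph) : graph := spider g h j G K1 K1.

Definition simple (G : graph) : Prop :=
  ssrbool.symmetric (@adj G) /\ irreflexive (@adj G).

(* Pin the colour c of the root r of a rooted graph and drop the variable of r: the
   resulting weights Xpin r c form a vector indexed by colours.  Gluing two rooted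
   graphs at their roots multiplies these vectors pointwise, and attaching a pendant
   edge at the root applies the operator T = pend, (T u)_c = \sum_(e != c) x_e u_e.
   For the form <u, w> = \sum_c x_c u_c w_c, T is self-adjoint and T u = <u, 1> - x u.
   Hence X of the spider S^{ghj}(G, H, K_1) is \sum_c x_c (T^g a)_c (T^h b)_c (T^j 1)_c,
   and both identities follow by induction on j, each step trading one T on the third
   leg for one on the first leg plus a correction <T^j 1, 1><T^{g+h} a, b>
   - <T^g a, 1><T^{h+j} b, 1>. *)

From Pilot Require Import Defs.
From HB Require Import structures.
From mathcomp Require Import all_boot all_algebra.
From mathcomp Require Import mpoly.
From mathcomp Require Import ring zify.

Set Implicit Arguments.
Unset Strict Implicit.
Unset Printing Implicit Defensive.

Import GRing.Theory.
Local Open Scope ring_scope.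

Section WeightedColourings.
Variables (R : comPzRingType) (N : nat) (x : 'I_N -> R).
Local Notation one := (fun _ : 'I_N => 1 : R).

Section PendantOperator.
Implicit Types (u w a b : 'I_N -> R) (c : 'I_N).

Definition wdot u w : R := \sum_c x c * u c * w c.
Definition wdot3 a b w : R := \sum_c x c * a c * b c * w c.

Definition pend u c : R := \sum_(e | e != c) x e * u e.

Definition pathw (n : nat) : R := if n is m.+1 then wdot (iter m pend one) one else 1.

Lemma pendE u c : pend u c = wdot u one - x c * u c.
Proof.
rewrite /wdot /pend [in RHS](bigD1 c) //= mulr1 addrC addrK.
by apply: eq_bigr => e _; rewrite mulr1.
Qed.

Lemma eq_iter_pend m u w : u =1 w -> iter m pend u =1 iter m pend w.
Proof.
move=> eq_uw; elim: m => [|m IHm] c //=.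
by apply: eq_bigr => e _; rewrite IHm.
Qed.

Lemma wdot_pend u w : wdot (pend u) w = wdot u (pend w).
Proof.
rewrite /wdot /pend.
under eq_bigr => c _ do rewrite mulrAC big_distrr big_mkcond.
under [RHS]eq_bigr => c _ do rewrite big_distrr big_mkcond.
rewrite exchange_big; apply: eq_bigr => e _; apply: eq_bigr => c _.
by rewrite eq_sym; case: (c != e); rewrite /= ?mulr0 //; ring.
Qed.

Lemma wdot_iter_pend m n u w :
  wdot (iter m pend u) (iter n pend w) = wdot (iter (m + n) pend u) w.
Proof.
elim: n m => [|n IHn] m; first by rewrite addn0.
by rewrite iterS -wdot_pend -iterS IHn addSnnS.
Qed.

Lemma wdot3_one a b : wdot3 a b one = wdot a b.
Proof. by apply: eq_bigr => c _; rewrite mulr1. Qed.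

Lemma wdot3_pend a b w :
  wdot3 a b (pend w) = wdot3 (pend a) b w + wdot w one * wdot a b - wdot a one * wdot b w.
Proof.
rewrite /wdot3; under eq_bigr => c _ do rewrite pendE.
under [in RHS]eq_bigr => c _ do rewrite pendE.
rewrite /wdot [in RHS]mulr_sumr [X in _ = _ - X]mulr_sumr -big_split /= -sumrB.
by apply: eq_bigr => c _; ring.
Qed.

Lemma wdot3_iter_pend a b g h j :
  wdot3 (iter g pend a) (iter h pend b) (iter j pend one) =
  \sum_(0 <= i < j.+1) pathw i * wdot (iter (g + h + j - i) pend a) b
  - \sum_(1 <= i < j.+1)
      wdot (iter (g + i - 1) pend a) one * wdot (iter (h + j - i) pend b) one.
Proof.
elim: j g => [|j IHj] g.
  by rewrite big_nat1 big_geq // subr0 addn0 subn0 mul1r wdot3_one wdot_iter_pend.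
rewrite iterS wdot3_pend -iterS IHj !wdot_iter_pend.
have split_last :
    \sum_(0 <= i < j.+2) pathw i * wdot (iter (g + h + j.+1 - i) pend a) b =
    \sum_(0 <= i < j.+1) pathw i * wdot (iter (g.+1 + h + j - i) pend a) b
    + wdot (iter j pend one) one * wdot (iter (g + h) pend a) b.
  rewrite big_nat_recr //=; congr (_ + _); last by rewrite addnS subSS addnK.
  by apply: eq_big_nat => i _; rewrite -addSnnS addSn.
have split_first :
    \sum_(1 <= i < j.+2)
       wdot (iter (g + i - 1) pend a) one * wdot (iter (h + j.+1 - i) pend b) one =
    wdot (iter g pend a) one * wdot (iter (h + j) pend b) one
    + \sum_(1 <= i < j.+1)
       wdot (iter (g.+1 + i - 1) pend a) one * wdot (iter (h + j - i) pend b) one.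
  rewrite big_nat_recl // addn1 addnS !subn1 /=; congr (_ + _).
  by apply: eq_big_nat => i _; rewrite !addnS addSn subSS.
by rewrite split_last split_first; ring.
Qed.

End PendantOperator.

Implicit Types (G : graph) (c d : 'I_N).
Local Notation col G := {ffun vert G -> 'I_N}.

Definition Xw G : R := \sum_(k : col G | Defs.proper k) \prod_v x (k v).

Definition Xpin G (v : vert G) c : R :=
  \sum_(k : col G | Defs.proper k && (k v == c)) \prod_(u | u != v) x (k u).

Definition Xpin2 G (r y : vert G) d c : R :=
  \sum_(k : col G | [&& Defs.proper k, k r == d & k y == c]) \prod_(u | u != r) x (k u).

Lemma mul_Xpin G (v : vert G) c :
  x c * Xpin v c = \sum_(k : col G | Defs.proper k && (k v == c)) \prod_u x (k u).
Proof.
rewrite mulr_sumr; apply: eq_bigr => k /andP[_ /eqP <-].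
by rewrite [RHS](bigD1 v).
Qed.

Lemma Xw_pin G (v : vert G) : Xw G = \sum_c x c * Xpin v c.
Proof.
rewrite /Xw (partition_big (fun k : col G => k v) predT) //.
by apply: eq_bigr => c _; rewrite mul_Xpin.
Qed.

Lemma Xpin_pin2 G (r y : vert G) d : Xpin r d = \sum_c Xpin2 r y d c.
Proof.
rewrite /Xpin (partition_big (fun k : col G => k y) predT) //.
by apply: eq_bigr => c _; apply: eq_bigl => k; rewrite andbA.
Qed.

Lemma Xpin2_id G (r : vert G) d c : Xpin2 r r d c = (d == c)%:R * Xpin r d.
Proof.
rewrite /Xpin2 /Xpin; have [<-|neq_dc] := eqVneq d c.
  by rewrite mul1r; apply: eq_bigl => k; rewrite andbb.
rewrite mul0r big1 // => k /and3P[_ /eqP krd /eqP krc].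
by rewrite -krd krc eqxx in neq_dc.
Qed.

Lemma Xpin_single G (v : vert G) d :
  (forall u, u = v) -> ~~ adj v v -> Xpin v d = 1.
Proof.
move=> all_v nadj_v; rewrite /Xpin (big_pred1 [ffun _ => d]).
  by rewrite big_pred0 // => u; rewrite (all_v u) eqxx.
move=> k /=; apply/andP/eqP => [[_ /eqP kv]|->].
  by apply/ffunP => u; rewrite ffunE (all_v u).
split; last by rewrite ffunE.
by apply/forallP => u; apply/forallP => w; rewrite (all_v u) (all_v w) (negbTE nadj_v).
Qed.

Section Gluing.
Variables A B : rooted_graph.
Local Notation rA := (Defs.root A).
Local Notation rB := (Defs.root B).
Local Notation AB := (glue_graph A B).
Implicit Types (p : col A * col B) (k : col AB).

Lemma inB_root : inB A rB = inA B rA.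
Proof. by rewrite /inB insubF //= eqxx. Qed.

Lemma inB_val (z : {y : vert B | y != rB}) : inB A (val z) = inr z.
Proof. by rewrite /inB valK. Qed.

Definition join_col (p : col A * col B) : col AB :=
  [ffun u => match u with inl y => p.1 y | inr z => p.2 (val z) end].

Definition split_col (k : col AB) : col A * col B :=
  ([ffun y => k (inA B y)], [ffun z => k (inB A z)]).

Lemma split_colK : cancel split_col join_col.
Proof. by move=> k; apply/ffunP => -[y|z]; rewrite !ffunE ?inB_val. Qed.

Lemma join_col_inB p z : p.1 rA = p.2 rB -> join_col p (inB A z) = p.2 z.
Proof.
move=> glued; have [->|neq_z] := eqVneq z rB; first by rewrite inB_root ffunE.
by rewrite /inB insubT ffunE.
Qed.

Lemma split_join_colE p : (split_col (join_col p) == p) = (p.1 rA == p.2 rB).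
Proof.
case: p => kA kB; rewrite /split_col xpair_eqE /=.
have -> : [ffun y => join_col (kA, kB) (inA B y)] = kA by apply/ffunP => y; rewrite !ffunE.
rewrite eqxx /=; apply/eqP/eqP => [<-|glued].
  by rewrite !ffunE inB_root.
by apply/ffunP => z; rewrite ffunE join_col_inB.
Qed.

Lemma join_colK p : p.1 rA = p.2 rB -> split_col (join_col p) = p.
Proof. by move=> glued; apply/eqP; rewrite split_join_colE glued. Qed.

Lemma proper_glue (k : col AB) :
  Defs.proper k = Defs.proper (split_col k).1 && Defs.proper (split_col k).2.
Proof.
apply/idP/andP => [/forallP Hk|[/forallP HA /forallP HB]].
  split; apply/forallP => y; apply/forallP => z; apply/implyP => adj_yz; rewrite !ffunE.
    have /forallP/(_ (inA B z))/implyP := Hk (inA B y); apply.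
    by apply/orP; left; apply/existsP; exists y; apply/existsP; exists z; rewrite !eqxx.
  have /forallP/(_ (inB A z))/implyP := Hk (inB A y); apply.
  by apply/orP; right; apply/existsP; exists y; apply/existsP; exists z; rewrite !eqxx.
apply/forallP => u; apply/forallP => v; apply/implyP.
case/orP=> /existsP[y] /existsP[z] /and3P[/eqP <- /eqP <- adj_yz].
  by have /forallP/(_ z)/implyP/(_ adj_yz) := HA y; rewrite !ffunE.
by have /forallP/(_ z)/implyP/(_ adj_yz) := HB y; rewrite !ffunE.
Qed.

Lemma prod_join_col p :
  \prod_(u : vert AB) x (join_col p u) =
  \prod_(y : vert A) x (p.1 y) * \prod_(z | z != rB) x (p.2 z).
Proof.
rewrite big_sumType /=; congr (_ * _); first by apply: eq_bigr => y _; rewrite ffunE.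
rewrite [RHS](reindex_omap (val : {y : vert B | y != rB} -> vert B) insub); last first.
  by move=> z neq_z; rewrite insubT.
apply: eq_big => [[z neq_z]|z _]; first by rewrite /= insubT neq_z /= eqxx.
by rewrite ffunE.
Qed.

Lemma sum_glue_col (F : col AB -> R) :
  \sum_(k : col AB | Defs.proper k) F k =
  \sum_(kA : col A | Defs.proper kA)
     \sum_(kB : col B | Defs.proper kB && (kA rA == kB rB)) F (join_col (kA, kB)).
Proof.
rewrite (reindex_onto join_col split_col); last by move=> k _; rewrite split_colK.
rewrite pair_big_dep; apply: eq_bigl => -[kA kB] /=.
rewrite split_join_colE /=; have [glued|] := eqVneq (kA rA) (kB rB); last by rewrite !andbF.
by rewrite !andbT (proper_glue (join_col _)) join_colK.
Qed.

Lemma mul_Xpin_glue (z : vert B) c :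
  x c * @Xpin AB (inB A z) c = \sum_d x d * Xpin rA d * Xpin2 rB z d c.
Proof.
rewrite mul_Xpin big_mkcondr sum_glue_col.
rewrite (partition_big (fun kA : col A => kA rA) predT) //=; apply: eq_bigr => d _.
rewrite mul_Xpin big_distrl /=; apply: eq_bigr => kA /andP[_ /eqP kA_d].
rewrite /Xpin2 big_distrr big_mkcondr /= [RHS]big_mkcondr /=.
apply: eq_bigr => kB _; rewrite kA_d eq_sym.
have [kB_d|] := eqVneq (kB rB) d; last by [].
by rewrite join_col_inB ?kA_d ?kB_d // prod_join_col.
Qed.

Lemma mul_Xpin_glue_root d :
  x d * @Xpin AB (inA B rA) d = x d * Xpin rA d * Xpin rB d.
Proof.
rewrite -inB_root mul_Xpin_glue (bigD1 d) //= Xpin2_id eqxx mul1r big1 ?addr0 //.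
by move=> e /negbTE neq_ed; rewrite Xpin2_id neq_ed mul0r mulr0.
Qed.

Lemma Xw_glue : Xw AB = \sum_d x d * Xpin rA d * Xpin rB d.
Proof.
rewrite (@Xw_pin AB (inA B rA)).
by apply: eq_bigr => d _; rewrite mul_Xpin_glue_root.
Qed.

End Gluing.

Section PathExtension.
Variable m : nat.
Implicit Types p : col (P m.+1) * 'I_N.

Definition snoc_col p : col (P m.+2) :=
  [ffun i => if unlift ord_max i is Some j then p.1 j else p.2].

Definition unsnoc_col (k : col (P m.+2)) : col (P m.+1) * 'I_N :=
  ([ffun j => k (lift ord_max j)], k ord_max).

Lemma snoc_col_lift p j : snoc_col p (lift ord_max j) = p.1 j.
Proof. by rewrite ffunE liftK. Qed.

Lemma snoc_col_max p : snoc_col p ord_max = p.2.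
Proof. by rewrite ffunE unlift_none. Qed.

Lemma snoc_col0 p : snoc_col p ord0 = p.1 ord0.
Proof.
rewrite -[ord0 in LHS](_ : lift ord_max ord0 = ord0) ?snoc_col_lift //.
exact: val_inj.
Qed.

Lemma unsnoc_colK : cancel unsnoc_col snoc_col.
Proof.
move=> k; apply/ffunP => i; rewrite ffunE.
by case: unliftP => [j ->|->]; rewrite ?ffunE.
Qed.

Lemma snoc_colK : cancel snoc_col unsnoc_col.
Proof.
case=> k e; rewrite /unsnoc_col snoc_col_max; congr (_, _).
by apply/ffunP => j; rewrite ffunE snoc_col_lift.
Qed.

Lemma bump_max (j : 'I_m.+1) : bump m.+1 j = j.
Proof. exact: lift_max. Qed.

Lemma adj_path_lift (i j : 'I_m.+1) :
  @adj (P m.+2) (lift ord_max i) (lift ord_max j) = @adj (P m.+1) i j.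
Proof. by rewrite [LHS]/= !bump_max. Qed.

Lemma adj_path_max_lift (j : 'I_m.+1) :
  @adj (P m.+2) ord_max (lift ord_max j) = (j == ord_max).
Proof. by rewrite [LHS]/= bump_max eqSS (gtn_eqF (leqW (ltn_ord j))). Qed.

Lemma adj_path_lift_max (j : 'I_m.+1) :
  @adj (P m.+2) (lift ord_max j) ord_max = (j == ord_max).
Proof. by rewrite -adj_path_max_lift /= orbC. Qed.

Lemma adj_path_max_max : @adj (P m.+2) ord_max ord_max = false.
Proof. by rewrite /= eqn_leq ltnn. Qed.

Lemma proper_snoc_col p :
  Defs.proper (snoc_col p) = Defs.proper p.1 && (p.2 != p.1 ord_max).
Proof.
apply/idP/andP => [/forallP Hk|[/forallP Hk1 neq_last]].
  split.
    apply/forallP => i; apply/forallP => j; apply/implyP => adj_ij.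
    have /forallP/(_ (lift ord_max j))/implyP := Hk (lift ord_max i).
    by rewrite adj_path_lift !snoc_col_lift; apply.
  have /forallP/(_ (lift ord_max ord_max))/implyP := Hk ord_max.
  by rewrite adj_path_max_lift snoc_col_max snoc_col_lift eqxx; apply.
apply/forallP => i; apply/forallP => j; apply/implyP.
case: (unliftP ord_max i) => [i' ->|->]; case: (unliftP ord_max j) => [j' ->|->].
- rewrite adj_path_lift !snoc_col_lift => adj_ij.
  by have /forallP/(_ j')/implyP := Hk1 i'; apply.
- by rewrite adj_path_lift_max snoc_col_lift snoc_col_max => /eqP ->; rewrite eq_sym.
- by rewrite adj_path_max_lift snoc_col_lift snoc_col_max => /eqP ->.
- by rewrite adj_path_max_max.
Qed.

Lemma prod_snoc_col p :
  \prod_(i : 'I_m.+2 | i != ord0) x (snoc_col p i) =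
  x p.2 * \prod_(j : 'I_m.+1 | j != ord0) x (p.1 j).
Proof.
rewrite (bigD1_ord ord_max) //= snoc_col_max; congr (_ * _).
by apply: eq_big => j; rewrite ?snoc_col_lift // -val_eqE /= bump_max.
Qed.

End PathExtension.

Lemma Xpin2_path0 d c : @Xpin2 (P 1) ord0 ord_max d c = (d == c)%:R.
Proof.
rewrite (_ : ord_max = ord0); last exact: val_inj.
by rewrite Xpin2_id Xpin_single ?mulr1 // => u; apply: val_inj; case: u => -[].
Qed.

Lemma Xpin2_pathS m d c :
  @Xpin2 (P m.+2) ord0 ord_max d c =
  x c * \sum_(e | e != c) @Xpin2 (P m.+1) ord0 ord_max d e.
Proof.
rewrite /Xpin2 (reindex_onto (@snoc_col m) (@unsnoc_col m)); last first.
  by move=> k _; rewrite unsnoc_colK.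
pose Pd (k : col (P m.+1)) := Defs.proper k && (k ord0 == d).
rewrite (eq_bigl (fun p : col (P m.+1) * 'I_N =>
                  Pd p.1 && ((p.2 == c) && (p.2 != p.1 ord_max)))); last first.
  move=> p; rewrite snoc_colK eqxx andbT proper_snoc_col snoc_col0 snoc_col_max /Pd.
  by case: (Defs.proper p.1); case: (p.1 ord0 == d); rewrite //= andbC.
rewrite (eq_bigr (fun p : col (P m.+1) * 'I_N =>
                  x p.2 * \prod_(j | j != ord0) x (p.1 j))); last first.
  by move=> p _; rewrite prod_snoc_col.
rewrite -(pair_big_dep Pd (fun k e => (e == c) && (e != k ord_max))
                       (fun k e => x e * \prod_(j | j != ord0) x (k j))) /=.
rewrite mulr_sumr; under [RHS]eq_bigr => e _ do rewrite mulr_sumr.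
rewrite (exchange_big_dep Pd) /=; last first.
  by move=> e k _ /and3P[proper_k k0_d _]; apply/andP.
apply: eq_bigr => k /andP[proper_k k0_d].
rewrite big_mkcondr big_pred1_eq.
rewrite (eq_bigl (fun e => (e == k ord_max) && (e != c))); last first.
  by move=> e; rewrite proper_k k0_d /= andbC eq_sym.
by rewrite big_mkcondr big_pred1_eq eq_sym.
Qed.

Lemma sum_Xpin2_path a m c :
  \sum_d x d * a d * @Xpin2 (P m.+1) ord0 ord_max d c = x c * iter m pend a c.
Proof.
elim: m c => [|m IHm] c.
  rewrite (bigD1 c) //= Xpin2_path0 eqxx mulr1 big1 ?addr0 // => d /negbTE neq_dc.
  by rewrite Xpin2_path0 neq_dc mulr0.
under eq_bigr => d _ do rewrite Xpin2_pathS mulrCA mulr_sumr.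
rewrite -big_distrr /= exchange_big /=; congr (_ * _).
by apply: eq_bigr => e _; rewrite IHm.
Qed.

Lemma mul_Xpin_pendant (G : rooted_graph) m c :
  x c * Xpin (Defs.root (pendant G m)) c = x c * iter m pend (Xpin (Defs.root G)) c.
Proof. by rewrite mul_Xpin_glue -sum_Xpin2_path. Qed.

Lemma Xw_Gpow (G : rooted_graph) m :
  Xw (Gpow G m) = wdot (iter m pend (Xpin (Defs.root G))) one.
Proof.
rewrite (Xw_pin (Defs.root (pendant G m))); apply: eq_bigr => c _.
by rewrite mul_Xpin_pendant mulr1.
Qed.

Lemma Xw_Pk m (G H : rooted_graph) :
  Xw (Pk m G H) = wdot (iter m pend (Xpin (Defs.root G))) (Xpin (Defs.root H)).
Proof. by rewrite Xw_glue; apply: eq_bigr => d _; rewrite mul_Xpin_pendant. Qed.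

Lemma Xw_path n : Xw (P n) = pathw n.
Proof.
case: n => [|n].
  rewrite /Xw (eq_bigl xpredT) => [|k]; last by apply/forallP => -[].
  rewrite (eq_bigr (fun _ => 1)) => [|k _]; last by rewrite big_ord0.
  by rewrite sumr_const card_ffun !card_ord expn0.
rewrite (@Xw_pin (P n.+1) ord0).
under eq_bigr => d _ do rewrite (@Xpin_pin2 (P n.+1) ord0 ord_max) mulr_sumr.
rewrite exchange_big; apply: eq_bigr => c _; rewrite mulr1 -sum_Xpin2_path.
by apply: eq_bigr => d _; rewrite mulr1.
Qed.

Lemma Xpin_K1 c : Xpin (Defs.root K1) c = 1.
Proof. by apply: Xpin_single => // -[]. Qed.

Section RegularWeights.
Hypothesis x_lreg : forall c, GRing.lreg (x c).

Lemma Xpin_pendant (G : rooted_graph) m c :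
  Xpin (Defs.root (pendant G m)) c = iter m pend (Xpin (Defs.root G)) c.
Proof. exact/x_lreg/mul_Xpin_pendant. Qed.

Lemma Xw_spider (G H : rooted_graph) g h j :
  Xw (spider g h j G H K1) =
  wdot3 (iter g pend (Xpin (Defs.root G))) (iter h pend (Xpin (Defs.root H)))
        (iter j pend one).
Proof.
rewrite Xw_glue; apply: eq_bigr => d _.
rewrite mul_Xpin_glue_root mul_Xpin_pendant !Xpin_pendant.
by rewrite (eq_iter_pend _ Xpin_K1).
Qed.

Lemma Xw_spider_K1 (G : rooted_graph) g h j :
  Xw (spider g h j G K1 K1) =
  wdot3 (iter g pend (Xpin (Defs.root G))) (iter h pend one) (iter j pend one).
Proof. by rewrite Xw_spider; apply: eq_bigr => c _; rewrite (eq_iter_pend _ Xpin_K1). Qed.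

End RegularWeights.

End WeightedColourings.

Lemma mpolyX_lreg N (c : 'I_N) : GRing.lreg ('X_c : {mpoly int[N]}).
Proof. by apply/mulfI; rewrite -msize_poly_eq0 msizeX. Qed.

Lemma X_Xw N (G : graph) : X N G = Xw (fun c : 'I_N => 'X_c : {mpoly int[N]}) G.
Proof. by []. Qed.

Theorem corollary4p3 (G H : rooted_graph) (g h j : nat) :
  simple G -> simple H -> (0 < h)%N ->
  forall N : nat,
    X N (S2 g h j G H) =
      \sum_(0 <= i < j.+1) X N (P i) * X N (Pk (g + h + j - i) G H)
      - \sum_(1 <= i < j.+1) X N (Gpow G (g + i - 1)) * X N (Gpow H (h + j - i))
  /\
    X N (S1 g h j G) =
      \sum_(0 <= i < j.+1) X N (P i) * X N (Gpow G (g + j - i + h))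
      - \sum_(1 <= i < j.+1) X N (P (i + h)) * X N (Gpow G (g + j - i)).
Proof.
move=> _ _ _ N; have xreg := @mpolyX_lreg N.
split.
  rewrite X_Xw Xw_spider // wdot3_iter_pend.
  congr (_ - _); apply: eq_bigr => i _; rewrite !X_Xw.
    by rewrite Xw_path Xw_Pk.
  by rewrite !Xw_Gpow.
rewrite X_Xw Xw_spider_K1 // wdot3_iter_pend; congr (_ - _).
  apply: eq_big_nat => i /andP[_ lt_ij]; rewrite !X_Xw Xw_path Xw_Gpow.
  by rewrite (_ : (g + j - i + h = g + h + j - i)%N) //; lia.
rewrite big_nat_rev /=; apply: eq_big_nat => -[//|i] /andP[_ lt_ij].
have -> : (g + (1 + j.+1 - i.+2) - 1 = g + j - i.+1)%N by lia.
have -> : (h + j - (1 + j.+1 - i.+2) = i + h)%N by lia.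
by rewrite !X_Xw Xw_path Xw_Gpow mulrC.
Qed.
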